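(* Let $f\colon\mathbb{Z}_p^r\to\mathbb{Z}_p$ be a continuous function. Suppose that for every $z\in\mathbb{Z}_p$ there exist $\overline{x},\overline{y}\in\mathbb{Z}_p^r$ with $f(\overline{y})\neq 0$ and $f(\overline{x})/f(\overline{y})=z$. Then $R(f)$ is dense in $\mathbb{Q}_p$.
   Context: For a function $f$ on $\mathbb{Z}_p^r$, $R(f)=\{f(\overline{x})/f(\overline{y}) : \overline{x},\overline{y}\in\mathbb{Z}^r,\ f(\overline{y})\neq 0\}$; density is in the $p$-adic topology. *)

From mathcomp Require Import all_boot all_order all_algebra.
Set Implicit Arguments. Unset Strict Implicit. Unset Printing Implicit Defensive.
Import Order.TTheory GRing.Theory Num.Theory.
Local Open Scope ring_scope.

(* An element of Z_p is represented by a coherent sequence of integers:      *)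
(* dig n is a representative of its residue modulo p^n, and the residues are *)
(* compatible.  Two representations denote the same p-adic integer iff they  *)
(* agree modulo p^n for every n (see zp_eq).                                 *)
Record padic_int (p : nat) := MkPadicInt {
  dig : nat -> int;
  dig_compat : forall n : nat, (dig n.+1 = dig n %[mod (p ^ n)%N%:Z])%Z
}.

Definition zp_congr (p : nat) (n : nat) (x y : padic_int p) : Prop :=
  (dig x n = dig y n %[mod (p ^ n)%N%:Z])%Z.

Definition zp_eq (p : nat) (x y : padic_int p) : Prop := forall n, zp_congr n x y.

Definition zp_nonzero (p : nat) (x : padic_int p) : Prop :=
  exists n, (dig x n <> 0 %[mod (p ^ n)%N%:Z])%Z.

Definition zp_mul_eq (p : nat) (x y z : padic_int p) : Prop :=
  forall n, (dig x n * dig y n = dig z n %[mod (p ^ n)%N%:Z])%Z.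

Definition int_Zp (p : nat) (z : int) : padic_int p := @MkPadicInt p (fun _ => z) (fun _ => erefl).

Definition zp_continuous (p r : nat) (F : ('I_r -> padic_int p) -> padic_int p) : Prop :=
  forall (x : 'I_r -> padic_int p) (n : nat), exists m : nat,
    forall y : 'I_r -> padic_int p, (forall i, zp_congr m (x i) (y i)) ->
      zp_congr n (F x) (F y).

(* Elements of Q_p: every element of Q_p is a / p^k with a in Z_p, k in N. *)
Record padic_num (p : nat) := MkPadicNum { qnum : padic_int p; qexp : nat }.

(* For u, v in Z_p with v <> 0 and q = a/p^k in Q_p:                         *)
(*   | u/v - a/p^k |_p <= p^-n                                               *)
(* Writing v_p(v) = j, this is  v_p(p^k u - a v) >= n + k + j.               *)
Definition ratio_close (p : nat) (u v : padic_int p) (q : padic_num p) (n : nat) : Prop :=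
  exists j : nat,
    (dig v j = 0 %[mod (p ^ j)%N%:Z])%Z /\
    (dig v j.+1 <> 0 %[mod (p ^ j.+1)%N%:Z])%Z /\
    (let N := (n + qexp q + j)%N in
     ((p ^ qexp q)%N%:Z * dig u N - dig (qnum q) N * dig v N = 0
        %[mod (p ^ N)%N%:Z])%Z).

Definition ratio_set_dense (p r : nat) (F : ('I_r -> padic_int p) -> padic_int p) : Prop :=
  forall (q : padic_num p) (n : nat), exists x y : 'I_r -> int,
    zp_nonzero (F (fun i => int_Zp p (y i))) /\
    ratio_close (F (fun i => int_Zp p (x i))) (F (fun i => int_Zp p (y i))) q n.

From mathcomp Require Import all_boot all_order all_algebra.
From mathcomp Require Import ring zify.
Set Implicit Arguments. Unset Strict Implicit. Unset Printing Implicit Defensive.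
Import Order.TTheory GRing.Theory Num.Theory.
Local Open Scope ring_scope.

(* Write q = a / p^k.  If q lies in Z_p, the hypothesis realises q exactly as
   a ratio F(x) / F(y) of values at p-adic points.  Otherwise a = p^s w with
   s < k and p not dividing w, so 1/q = p^(k-s) w^-1 lies in Z_p; realising it
   as F(x) / F(y) gives q = F(y) / F(x).  Whether |u/v - q|_p <= p^-n only
   depends on finitely many p-adic digits of u and v, so by continuity of F
   the points x and y may be replaced by integer truncations. *)

Lemma eqz_modP (a b d : int) : (a = b %[mod d])%Z <-> (d %| a - b)%Z.
Proof. by rewrite -eqz_mod_dvd; split=> [->|/eqP]. Qed.

Lemma eqz_mod0P (a d : int) : (a = 0 %[mod d])%Z <-> (d %| a)%Z.
Proof. by rewrite eqz_modP subr0. Qed.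

Section Padic.

Variable p : nat.

Local Notation P m := ((p ^ m)%N%:Z).

Lemma pexpzD m n : P (m + n) = P m * P n.
Proof. by rewrite expnD PoszM. Qed.

Lemma dvdz_pexp m n : (m <= n)%N -> (P m %| P n)%Z.
Proof. by move=> le_mn; rewrite dvdzE /= dvdn_exp2l. Qed.

Lemma dvdz_dig_sub (x : padic_int p) m M : (m <= M)%N ->
  (P m %| dig x M - dig x m)%Z.
Proof.
move=> le_mM; rewrite -(subnKC le_mM); elim: (M - m)%N => [|d IHd].
  by rewrite addn0 subrr dvdz0.
have /eqz_modP step := dig_compat x (m + d).
rewrite addnS -[_ - dig x m](subrKA (dig x (m + d))).
by rewrite rpredD //; apply: dvdz_trans step; rewrite dvdz_pexp ?leq_addr.
Qed.

Lemma dvdz_dig_le (x : padic_int p) m M : (m <= M)%N ->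
  (P m %| dig x M)%Z = (P m %| dig x m)%Z.
Proof.
by move=> le_mM; rewrite -[dig x M](subrK (dig x m)) rpredDl ?dvdz_dig_sub.
Qed.

Lemma zp_congr_le (x y : padic_int p) m M : (m <= M)%N ->
  zp_congr M x y -> zp_congr m x y.
Proof.
move=> le_mM /eqz_modP congrM; apply/eqz_modP.
have -> : dig x m - dig y m =
    (dig x M - dig y M) - (dig x M - dig x m) + (dig y M - dig y m) by ring.
apply: rpredD; last exact: dvdz_dig_sub.
by apply: rpredB; [apply: dvdz_trans congrM; apply: dvdz_pexp | apply: dvdz_dig_sub].
Qed.

Definition zp_valuation (x : padic_int p) (j : nat) : Prop :=
  (P j %| dig x j)%Z /\ ~~ (P j.+1 %| dig x j.+1)%Z.

Lemma zp_valuation_dvdz x j N : zp_valuation x j -> (j <= N)%N ->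
  (P j %| dig x N)%Z.
Proof. by case=> dvd_j _ le_jN; rewrite dvdz_dig_le. Qed.

Lemma zp_valuation_nonzero x j : zp_valuation x j -> zp_nonzero x.
Proof. by case=> _ ndvd; exists j.+1 => /eqz_mod0P; apply/negP. Qed.

Lemma exists_valuation_lt x m : ~~ (P m %| dig x m)%Z ->
  exists2 j, (j < m)%N & zp_valuation x j.
Proof.
elim: m => [|m IHm] ndvd; first by rewrite expn0 dvd1z in ndvd.
have [dvd_m | /IHm[j lt_jm val_j]] := boolP (P m %| dig x m)%Z.
  by exists m.
by exists j => //; apply: ltnW.
Qed.

Lemma zp_nonzero_valuation x : zp_nonzero x -> exists j, zp_valuation x j.
Proof.
case=> m nz_m; have /exists_valuation_lt[j _ val_j] : ~~ (P m %| dig x m)%Z.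
  by apply/negP => /eqz_mod0P.
by exists j.
Qed.

Lemma zp_valuation_congr x y j : zp_congr j.+1 x y ->
  zp_valuation x j -> zp_valuation y j.
Proof.
move=> congr_xy [dvd_j ndvd_j1].
have /eqz_modP d1 := congr_xy; have /eqz_modP d0 := zp_congr_le (leqnSn j) congr_xy.
have dig_yE k : dig y k = dig x k - (dig x k - dig y k) by ring.
by split; rewrite dig_yE rpredBr.
Qed.

Definition cross_diff (u v : padic_int p) (q : padic_num p) (N : nat) : int :=
  P (qexp q) * dig u N - dig (qnum q) N * dig v N.

Lemma ratio_closeP (u v : padic_int p) q n :
  ratio_close u v q n <-> exists j, zp_valuation v j /\
    (P (n + qexp q + j) %| cross_diff u v q (n + qexp q + j))%Z.
Proof.
split=> [[j [/eqz_mod0P dvd_j [ndvd_j1 /eqz_mod0P close]]] |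
         [j [[dvd_j ndvd_j1] close]]].
  by exists j; split=> //; split=> //; apply/negP => /eqz_mod0P.
exists j; split; first exact/eqz_mod0P.
by split; [move=> /eqz_mod0P; apply/negP | exact/eqz_mod0P].
Qed.

Lemma ratio_close_nonzero (u v : padic_int p) q n :
  ratio_close u v q n -> zp_nonzero v.
Proof. by case/ratio_closeP=> j [/zp_valuation_nonzero]. Qed.

Lemma ratio_close_locally (u v : padic_int p) q n : ratio_close u v q n ->
  exists L, forall u' v', zp_congr L u u' -> zp_congr L v v' ->
    ratio_close u' v' q n.
Proof.
case/ratio_closeP=> j [val_j close]; set N := (n + qexp q + j)%N in close.
exists N.+1 => u' v' congr_u congr_v; apply/ratio_closeP; exists j; split.
  by apply: zp_valuation_congr val_j; apply: zp_congr_le congr_v; rewrite ltnS leq_addl.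
have /eqz_modP dvd_u := zp_congr_le (leqnSn N) congr_u.
have /eqz_modP dvd_v := zp_congr_le (leqnSn N) congr_v.
have -> : cross_diff u' v' q N = cross_diff u v q N
    - P (qexp q) * (dig u N - dig u' N) + dig (qnum q) N * (dig v N - dig v' N).
  by rewrite /cross_diff; ring.
by apply: rpredD; [apply: rpredB | ]; rewrite ?dvdz_mull.
Qed.

Lemma ratio_set_dense_of_close r (F : ('I_r -> padic_int p) -> padic_int p) :
  zp_continuous F ->
  (forall q n, exists X Y, ratio_close (F X) (F Y) q n) ->
  ratio_set_dense F.
Proof.
move=> F_cont F_close q n; have [X [Y close_XY]] := F_close q n.
have [L close_near] := ratio_close_locally close_XY.
have [mX near_X] := F_cont X L; have [mY near_Y] := F_cont Y L.
exists (fun i => dig (X i) mX), (fun i => dig (Y i) mY).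
have close_xy : ratio_close (F (fun i => int_Zp p (dig (X i) mX)))
                            (F (fun i => int_Zp p (dig (Y i) mY))) q n.
  by apply: close_near; [apply: near_X | apply: near_Y].
by split; first exact: ratio_close_nonzero close_xy.
Qed.

Lemma ratio_close_mul_int (c : int) (u v : padic_int p) q n j :
  zp_valuation v j -> zp_mul_eq (int_Zp p c) v u ->
  (P (n + qexp q) %| P (qexp q) * c - dig (qnum q) (n + qexp q))%Z ->
  ratio_close u v q n.
Proof.
move=> val_j mul_cvu approx_c; apply/ratio_closeP; exists j; split=> //.
set k := qexp q; set A := qnum q; set M := (n + k)%N; set N := (M + j)%N.
have /eqz_modP /= dvd_mul := mul_cvu N.
have dvd_v : (P j %| dig v N)%Z by apply: zp_valuation_dvdz val_j _; apply: leq_addl.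
have -> : cross_diff u v q N = (P k * c - dig A M) * dig v N
    - (dig A N - dig A M) * dig v N - P k * (c * dig v N - dig u N).
  by rewrite /cross_diff; ring.
apply: rpredB; last exact: dvdz_mull.
rewrite pexpzD; apply: rpredB; apply: dvdz_mul => //.
exact/dvdz_dig_sub/leq_addr.
Qed.

Hypothesis p_prime : prime p.

Lemma pexpz_neq0 m : P m != 0.
Proof. by rewrite eqz_nat expn_eq0 negb_and (gtn_eqF (prime_gt0 p_prime)). Qed.

Lemma coprimez_pexp m (d : int) : ~~ (p%:Z %| d)%Z -> coprimez (P m) d.
Proof.
by move=> ndvd_d; rewrite coprimezE coprimeXl // prime_coprime // -dvdzE.
Qed.

Lemma zp_valuation_mul_int e (d : int) (u v : padic_int p) t :
  ~~ (p%:Z %| d)%Z -> zp_mul_eq (int_Zp p (P e * d)) v u ->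
  zp_valuation v t -> zp_valuation u (e + t).
Proof.
move=> ndvd_d mul_cvu [dvd_t ndvd_t1].
have dig_uE N : dig u N = P e * (d * dig v N) - (P e * d * dig v N - dig u N).
  by ring.
have /eqz_modP /= dvd_mul := mul_cvu (e + t)%N.
split.
  rewrite dig_uE rpredBr // pexpzD; apply: dvdz_mul => //.
  by apply: dvdz_mull; rewrite dvdz_dig_le ?leq_addl.
apply: contra ndvd_t1 => dvd_u.
have /eqz_modP /= dvd_mul1 := mul_cvu (e + t).+1%N.
have : (P (e + t.+1) %| P e * (d * dig v (e + t).+1))%Z.
  by rewrite addnS -[X in (_ %| X)%Z](subrK (dig u (e + t).+1)) mulrA rpredD.
rewrite pexpzD dvdz_mul2l ?pexpz_neq0 // Gauss_dvdzr ?coprimez_pexp //.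
by rewrite dvdz_dig_le // -addnS leq_addl.
Qed.

(* d is an inverse modulo p^M of the unit a / p^s. *)
Lemma int_inverse_approx (a : int) s M :
  (P s %| a)%Z -> ~~ (P s.+1 %| a)%Z -> (0 < M)%N ->
  exists2 d : int, ~~ (p%:Z %| d)%Z & (P (s + M) %| P s - a * d)%Z.
Proof.
move=> dvd_s ndvd_s1 M_gt0; set w := (a %/ P s)%Z.
have aE : a = w * P s by rewrite divzK.
have ndvd_w : ~~ (p%:Z %| w)%Z.
  by apply: contra ndvd_s1 => dvd_w; rewrite aE expnS PoszM dvdz_mul.
have /coprimezP[[d v] /= bezout] : coprimez w (P M).
  by rewrite coprimez_sym coprimez_pexp.
exists d.
  apply/negP => dvd_d; have : (p%:Z %| 1%R)%Z.
    rewrite -bezout; apply: rpredD; first exact: dvdz_mulr.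
    by apply: dvdz_mull; apply: dvdz_trans (dvdz_pexp M_gt0); rewrite expn1.
  by rewrite dvdz1 /= => /eqP p_eq1; move: p_prime; rewrite p_eq1.
have vE : v * P M = 1 - d * w by rewrite -bezout; ring.
have -> : P s - a * d = P s * (v * P M) by rewrite vE aE; ring.
by rewrite pexpzD dvdz_mul // dvdz_mull.
Qed.

Lemma ratio_close_inv_mul_int e (d : int) (u v : padic_int p) q n t :
  ~~ (p%:Z %| d)%Z -> zp_valuation v t -> zp_mul_eq (int_Zp p (P e * d)) v u ->
  (P (n + qexp q + e) %| P (qexp q) - dig (qnum q) (n + qexp q) * (P e * d))%Z ->
  ratio_close v u q n.
Proof.
move=> ndvd_d val_t mul_cvu approx_inv; apply/ratio_closeP; exists (e + t)%N.
split; first exact: zp_valuation_mul_int ndvd_d mul_cvu val_t.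
set k := qexp q; set A := qnum q; set M := (n + k)%N; set c := P e * d.
set N := (M + (e + t))%N.
have /eqz_modP /= dvd_mul := mul_cvu N.
have dvd_v : (P t %| dig v N)%Z.
  by apply: zp_valuation_dvdz val_t _; rewrite /N addnA leq_addl.
have -> : cross_diff v u q N = (P k - dig A M * c) * dig v N
    - (dig A N - dig A M) * c * dig v N + dig A N * (c * dig v N - dig u N).
  by rewrite /cross_diff; ring.
apply: rpredD; last exact: dvdz_mull.
have PN : P N = P (M + e) * P t by rewrite -pexpzD /N addnA.
apply: rpredB; first by rewrite PN; apply: dvdz_mul.
have PN' : P N = P M * (P e * P t) by rewrite -!pexpzD.
rewrite PN' -mulrA; apply: dvdz_mul; first exact/dvdz_dig_sub/leq_addr.
by apply: dvdz_mul; first exact/dvdz_mulr/dvdzz.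
Qed.

Variables (r : nat) (F : ('I_r -> padic_int p) -> padic_int p).
Hypothesis F_ratio_onto : forall z : padic_int p, exists x y : 'I_r -> padic_int p,
  zp_nonzero (F y) /\ zp_mul_eq z (F y) (F x).

Lemma exists_ratio_close_integral q n :
  (P (qexp q) %| dig (qnum q) (qexp q))%Z ->
  exists X Y, ratio_close (F X) (F Y) q n.
Proof.
move=> dvd_k; set k := qexp q; set A := qnum q; set M := (n + k)%N.
set c := (dig A M %/ P k)%Z.
have [X [Y [nz_FY mul_cFY]]] := F_ratio_onto (int_Zp p c).
have [j val_j] := zp_nonzero_valuation nz_FY.
exists X, Y; apply: ratio_close_mul_int val_j mul_cFY _.
by rewrite mulrC divzK ?subrr ?dvdz0 // dvdz_dig_le ?leq_addl.
Qed.

Lemma exists_ratio_close_nonintegral q n :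
  ~~ (P (qexp q) %| dig (qnum q) (qexp q))%Z ->
  exists X Y, ratio_close (F X) (F Y) q n.
Proof.
move=> /exists_valuation_lt[s lt_sk [dvd_s ndvd_s1]].
set k := qexp q in lt_sk *; set A := qnum q; set M := (n + k)%N.
have [d ndvd_d approx_d] :
    exists2 d : int, ~~ (p%:Z %| d)%Z & (P (s + M) %| P s - dig A M * d)%Z.
  by apply: int_inverse_approx; rewrite ?dvdz_dig_le //; lia.
have [X [Y [nz_FY mul_cFY]]] := F_ratio_onto (int_Zp p (P (k - s) * d)).
have [t val_t] := zp_nonzero_valuation nz_FY.
exists Y, X; apply: ratio_close_inv_mul_int ndvd_d val_t mul_cFY _.
have PkE : P k = P (k - s) * P s by rewrite -pexpzD subnK // ltnW.
have -> : P k - dig A M * (P (k - s) * d) = P (k - s) * (P s - dig A M * d).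
  by rewrite PkE; ring.
apply: dvdz_trans (dvdz_mul (dvdzz (P (k - s))) approx_d).
by rewrite -pexpzD dvdz_pexp //; lia.
Qed.

End Padic.

Unset Implicit Arguments.

Theorem lemma2p6 (p r : nat) (F : ('I_r -> padic_int p) -> padic_int p) :
  prime p ->
  zp_continuous F ->
  (forall z : padic_int p, exists x y : 'I_r -> padic_int p,
      zp_nonzero (F y) /\ zp_mul_eq z (F y) (F x)) ->
  ratio_set_dense F.
Proof.
move=> p_prime F_cont F_ratio_onto; apply: ratio_set_dense_of_close F_cont _ => q n.
have [dvd_k | ndvd_k] := boolP ((p ^ qexp q)%N%:Z %| dig (qnum q) (qexp q))%Z.
  exact: (exists_ratio_close_integral F_ratio_onto).
exact: (exists_ratio_close_nonintegral p_prime F_ratio_onto).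
Qed.
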